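(* Let $k\geq 0$ be an integer and $M_{k}(n)=\frac{1+(-1)^{k}k!(n-k-1)!}{n}$ for $n\ge k+1$, $M^+_k(n)=(-1)^kM_k(n)$. For $0<\lvert x\rvert<1$, \[ \sum_{n=0}^{\infty}M_{k}(n+k+1)\frac{x^{n}}{n!}=(-1)^{k}\left(k!\,\Phi(x,1,k+1)-\frac{\gamma(k+1,-x)}{x^{k+1}}\right), \] and \[ \sum_{n=0}^{\infty}M^{+}_{k}(n+k+1)\frac{x^{n}}{n!}=k!\,\Phi(x,1,k+1)-\frac{\gamma(k+1,-x)}{x^{k+1}}. \]
   Context: $\Phi(x,s,a)=\sum_{n=0}^{\infty}\frac{x^{n}}{(n+a)^{s}}$ is the Lerch transcendent, and $\gamma(a,z)=z^{a}\sum_{n=0}^{\infty}\frac{(-z)^{n}}{n!(n+a)}$ is the lower incomplete gamma function. *)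

From Stdlib Require Import Reals Factorial.
From Coquelicot Require Import Coquelicot.
Open Scope R_scope.

Definition lerchPhi (x : R) (s : nat) (a : R) : R :=
  Series (fun n => x ^ n / (INR n + a) ^ s).

(* Lower incomplete gamma gamma(a,z) = z^a sum_{n>=0} (-z)^n / (n! (n+a)),
   for a a positive integer (so z^a is the ordinary power). *)
Definition lowerGamma (a : nat) (z : R) : R :=
  z ^ a * Series (fun n => (- z) ^ n / (INR (fact n) * (INR n + INR a))).

(* M_k(n) = (1 + (-1)^k k! (n-k-1)!) / n, meaningful for n >= k+1. *)
Definition Mk (k n : nat) : R :=
  (1 + (-1) ^ k * INR (fact k) * INR (fact (n - k - 1))) / INR n.

Definition Mkplus (k n : nat) : R := (-1) ^ k * Mk k n.

From Stdlib Require Import Reals Factorial Lra Lia.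
From Coquelicot Require Import Coquelicot.
Open Scope R_scope.

(* Since [n - k - 1 = n'] for [n = n' + k + 1], the summand splits as
   [x^n' / (n'! (n' + k + 1)) + (-1)^k k! x^n' / (n' + k + 1)]: the first part sums to
   [(-1)^(k+1) gamma(k+1,-x) / x^(k+1)] and the second to [(-1)^k k! Phi(x,1,k+1)].
   Both series are dominated by the geometric series in [|x|]. *)

Lemma ex_series_geom_dominated (a : nat -> R) (x : R) :
  Rabs x < 1 -> (forall n, Rabs (a n) <= Rabs x ^ n) -> ex_series a.
Proof.
  intros Hx Hb.
  apply (@ex_series_le R_AbsRing R_CompleteNormedModule a (fun n => Rabs x ^ n)); [exact Hb|].
  exists (/ (1 - Rabs x)). apply is_series_geom. rewrite Rabs_Rabsolu; exact Hx.
Qed.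

Lemma Rabs_pow_div_le (x d : R) (n : nat) : 1 <= d -> Rabs (x ^ n / d) <= Rabs x ^ n.
Proof.
  intros Hd. rewrite Rabs_div by lra. rewrite <- RPow_abs, (Rabs_right d) by lra.
  apply Rmult_le_reg_r with d; [lra|].
  unfold Rdiv. rewrite Rmult_assoc, Rinv_l by lra.
  pose proof (pow_le (Rabs x) n (Rabs_pos x)). nra.
Qed.

Lemma pow_m1_involutive (k : nat) (y : R) : (-1) ^ k * ((-1) ^ k * y) = y.
Proof.
  rewrite <- Rmult_assoc, <- Rpow_mult_distr.
  replace (-1 * -1) with 1 by ring. rewrite pow1. ring.
Qed.

Lemma is_series_lerchPhi (x a : R) (s : nat) :
  Rabs x < 1 -> 1 <= a -> is_series (fun n => x ^ n / (INR n + a) ^ s) (lerchPhi x s a).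
Proof.
  intros Hx Ha. apply Series_correct, (ex_series_geom_dominated _ x Hx). intros n.
  apply Rabs_pow_div_le, pow_R1_Rle. pose proof (pos_INR n). lra.
Qed.

Lemma is_series_lowerGamma_div_pow (a : nat) (z : R) :
  (0 < a)%nat -> z <> 0 -> Rabs z < 1 ->
  is_series (fun n => (- z) ^ n / (INR (fact n) * (INR n + INR a))) (lowerGamma a z / z ^ a).
Proof.
  intros Ha Hz0 Hz. unfold lowerGamma.
  replace (z ^ a * _ / z ^ a) with (Series (fun n => (- z) ^ n / (INR (fact n) * (INR n + INR a))))
    by (field; apply pow_nonzero, Hz0).
  apply Series_correct, (ex_series_geom_dominated _ (- z)); [rewrite Rabs_Ropp; exact Hz|].
  intros n. apply Rabs_pow_div_le.
  assert (1 <= INR (fact n)) by (apply (le_INR 1), lt_O_fact).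
  assert (1 <= INR a) by (apply (le_INR 1); lia).
  pose proof (pos_INR n). nra.
Qed.

Lemma Mk_term_split (k n : nat) (x : R) :
  Mk k (n + k + 1) * x ^ n / INR (fact n)
  = x ^ n / (INR (fact n) * (INR n + INR (k + 1)))
    + x ^ n / (INR n + (INR k + 1)) ^ 1 * ((-1) ^ k * INR (fact k)).
Proof.
  unfold Mk. replace (n + k + 1 - k - 1)%nat with n by lia.
  rewrite !plus_INR. simpl INR.
  pose proof (INR_fact_lt_0 n). pose proof (pos_INR n). pose proof (pos_INR k).
  field. lra.
Qed.

Lemma lowerGamma_neg_div_pow (a : nat) (x : R) :
  x <> 0 -> lowerGamma a (- x) / x ^ a = (-1) ^ a * (lowerGamma a (- x) / (- x) ^ a).
Proof.
  intros Hx.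
  assert (Hneg : (- x) ^ a = (-1) ^ a * x ^ a) by (rewrite <- Rpow_mult_distr; f_equal; ring).
  rewrite Hneg. field. split; apply pow_nonzero; lra.
Qed.

Lemma Mkplus_term (k m : nat) (y d : R) : Mkplus k m * y / d = Mk k m * y / d * (-1) ^ k.
Proof. unfold Mkplus, Rdiv. ring. Qed.

Lemma is_series_Mk (k : nat) (x : R) :
  0 < Rabs x < 1 ->
  is_series (fun n => Mk k (n + k + 1) * x ^ n / INR (fact n))
    ((-1) ^ k * (INR (fact k) * lerchPhi x 1 (INR k + 1)
                 - lowerGamma (k + 1) (- x) / x ^ (k + 1))).
Proof.
  intros [Hx0 Hx1].
  assert (Hx : x <> 0) by (intros ->; rewrite Rabs_R0 in Hx0; lra).
  assert (HG := is_series_lowerGamma_div_pow (k + 1) (- x) ltac:(lia)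
                  ltac:(lra) ltac:(rewrite Rabs_Ropp; exact Hx1)).
  assert (HPhi := is_series_lerchPhi x (INR k + 1) 1 Hx1 ltac:(pose proof (pos_INR k); lra)).
  apply (is_series_scal_r ((-1) ^ k * INR (fact k))) in HPhi.
  assert (Hval : (-1) ^ k * (INR (fact k) * lerchPhi x 1 (INR k + 1)
                             - lowerGamma (k + 1) (- x) / x ^ (k + 1))
                 = plus (lowerGamma (k + 1) (- x) / (- x) ^ (k + 1))
                        (lerchPhi x 1 (INR k + 1) * ((-1) ^ k * INR (fact k)))).
  { rewrite lowerGamma_neg_div_pow, (pow_add (-1)), pow_1 by exact Hx.
    rewrite Rmult_minus_distr_l, (Rmult_assoc ((-1) ^ k) (-1)), pow_m1_involutive.
    unfold plus; simpl. ring. }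
  rewrite Hval.
  eapply is_series_ext; [|exact (is_series_plus _ _ _ _ HG HPhi)].
  intros n. rewrite Mk_term_split, Ropp_involutive. reflexivity.
Qed.

Theorem mainTheorem13 (k : nat) (x : R) :
  0 < Rabs x < 1 ->
  is_series (fun n => Mk k (n + k + 1) * x ^ n / INR (fact n))
    ((-1) ^ k * (INR (fact k) * lerchPhi x 1 (INR k + 1)
                 - lowerGamma (k + 1) (- x) / x ^ (k + 1)))
  /\
  is_series (fun n => Mkplus k (n + k + 1) * x ^ n / INR (fact n))
    (INR (fact k) * lerchPhi x 1 (INR k + 1)
     - lowerGamma (k + 1) (- x) / x ^ (k + 1)).
Proof.
  intros Hx. pose proof (is_series_Mk k x Hx) as HM. split; [exact HM|].
  apply (is_series_scal_r ((-1) ^ k)) in HM.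
  rewrite Rmult_comm, pow_m1_involutive in HM.
  eapply is_series_ext; [|exact HM].
  intros n. symmetry. apply Mkplus_term.
Qed.
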